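(* Let $(X,T)$ be a dynamical system and $\mathcal{F}$ a family. (i) If $\mathcal{F}$ is free, then $\omega_{\mathcal{F}}(x)\subset\omega_T(x)$ for every $x\in X$. Moreover, if $(X,T)$ has a nonrecurrent point and $\omega_{\mathcal{F}}(x)\subset\omega_T(x)$ for every $x\in X$, then $\mathcal{F}$ is free. (ii) If $\mathcal{F}$ is free and has the finite intersection property, then it has the strong finite intersection property.
   Context: A dynamical system $(X,T)$: $X$ is a compact metric space with more than one point and without isolated points, $T:X\to X$ a continuous surjection. A family is a collection $\mathcal{F}$ of subsets of $\mathbb{Z}_+$ that is hereditary upward. $\mathcal{F}$ is free if the intersection of all its elements is empty. $\omega_{\mathcal{F}}(x)=\bigcap_{F\in\mathcal{F}}\overline{\{T^ix:i\in F\}}$; $\omega_T(x)=\bigcap_{n\ge1}\overline{\{T^kx:k\ge n\}}$. A point $x$ is recurrent if $x\in\omega_T(x)$. $\mathcal{F}$ has the finite intersection property if every finite subcollection has nonempty intersection, and the strong finite intersection property if every finite subcollection has infinite intersection. *)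

From HB Require Import structures.
From mathcomp Require Import all_boot all_order all_algebra.
From mathcomp Require Import all_classical all_reals all_analysis.
Set Implicit Arguments. Unset Strict Implicit. Unset Printing Implicit Defensive.
Import Order.TTheory GRing.Theory Num.Theory.
Local Open Scope classical_set_scope.

Definition dynamical_system {R : realType} (X : metricType R) (T : X -> X) :=
  [/\ compact [set: X],
      (exists x y : X, x <> y),
      isolated [set: X] = set0,
      continuous T &
      (forall y : X, exists x, T x = y)].

(* family: collection of subsets of Z_+ = nat, hereditary upward *)
Definition is_family (F : set (set nat)) :=
  forall A B : set nat, F A -> A `<=` B -> F B.

Definition free_family (F : set (set nat)) := \bigcap_(A in F) A = set0.

Definition omegaF {X : topologicalType} (T : X -> X) (F : set (set nat)) (x : X) :=
  \bigcap_(A in F) closure [set iter i T x | i in A].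

Definition omegaT {X : topologicalType} (T : X -> X) (x : X) :=
  \bigcap_(n in [set n : nat | (1 <= n)%N])
     closure [set iter k T x | k in [set k : nat | (n <= k)%N]].

Definition recurrent {X : topologicalType} (T : X -> X) (x : X) := omegaT T x x.

Definition fip (F : set (set nat)) :=
  forall G : set (set nat), finite_set G -> G `<=` F -> \bigcap_(A in G) A !=set0.

Definition strong_fip (F : set (set nat)) :=
  forall G : set (set nat), finite_set G -> G `<=` F -> infinite_set (\bigcap_(A in G) A).

From HB Require Import structures.
From mathcomp Require Import all_boot all_order all_algebra.
From mathcomp Require Import all_classical all_reals all_analysis.
Local Open Scope classical_set_scope.

(** For (i), let [y] lie in omega_F(x) but outside the closure of the tail
   [{T^k x : k >= n}].  Points are closed, so [y] is then one of the finitely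
   many [T^i x] with [i < n] and [i] in a given member of [F]; freeness gives
   two such indices [m <> m'], so the orbit of [x] is eventually periodic and
   [y] reappears in every tail.  Conversely, if [i] lies in every member of [F]
   and [T^i z = x0], then [x0] is in omega_F(z), hence in omega_T(z), which is
   omega_T(x0) up to shifting tails: [x0] is recurrent.  For (ii), a finite
   subfamily [G] with finite intersection [I] extends, by freeness, to the
   finite subfamily [G] plus one member omitting each [i] of [I]; its
   intersection is empty. *)

Lemma free_familyP {F : set (set nat)} :
  free_family F -> forall i, exists2 A, F A & ~ A i.
Proof.
move=> freeF i; apply: contrapT => noA.
suff : (\bigcap_(A in F) A) i by rewrite freeF.
by move=> A FA; apply: contrapT => nAi; apply: noA; exists A.
Qed.

Lemma iter_neq_recurs {Y : Type} {f : Y -> Y} {x : Y} {m m' : nat} :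
  m != m' -> iter m f x = iter m' f x ->
  forall n, exists2 k, (n <= k)%N & iter k f x = iter m f x.
Proof.
have recurs p q : (p < q)%N -> iter p f x = iter q f x ->
    forall n, exists2 k, (n <= k)%N & iter k f x = iter p f x.
  move=> lt_pq eq_iter n.
  have periodic k : iter (k * (q - p) + p) f x = iter p f x.
    elim: k => // k IHk.
    by rewrite mulSn -addnA iterD IHk -iterD subnK 1?eq_iter // ltnW.
  exists (n * (q - p) + p)%N; last exact: periodic.
  by apply: leq_trans (leq_addr _ _); apply: leq_pmulr; rewrite subn_gt0.
rewrite neq_ltn => /orP[lt_mm' | lt_m'm] eq_iter; first exact: recurs lt_mm' eq_iter.
by rewrite eq_iter; exact: recurs lt_m'm (esym eq_iter).
Qed.

Lemma closure_image_tailV {X : topologicalType} {u : nat -> X} {A : set nat}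
    (n : nat) {y : X} :
  accessible_space X -> closure [set u i | i in A] y ->
  closure [set u k | k in [set k | (n <= k)%N]] y \/
  exists2 i, A i /\ (i < n)%N & u i = y.
Proof.
move=> /accessible_finite_set_closed finite_closed cl_y.
have head_closed : closed [set u i | i in A `&` `I_n].
  by apply: finite_closed; apply: finite_image; exact: finite_setIr.
have split_image : [set u i | i in A] `<=`
    [set u i | i in A `&` `I_n] `|` [set u k | k in [set k | (n <= k)%N]].
  by move=> _ [i Ai <-]; case: (ltnP i n) => ?; [left | right]; exists i.
move: (closureS split_image cl_y); rewrite closureU => -[|]; last by left.
by rewrite -(closure_id _).1 // => -[i Ai <-]; right; exists i.
Qed.

Lemma iter_surjective {Y : Type} {f : Y -> Y} :
  (forall y, exists x, f x = y) -> forall i y, exists x, iter i f x = y.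
Proof.
move=> surj; elim=> [y | i IHi y]; first by exists y.
have [w <-] := surj y; have [x <-] := IHi w.
by exists x.
Qed.

Section OmegaLimitSets.
Context {X : topologicalType} (T : X -> X).

Lemma omegaF_sub_omegaT (F : set (set nat)) :
  accessible_space X -> free_family F -> forall x, omegaF T F x `<=` omegaT T x.
Proof.
move=> T1 freeF x y omegaF_y n _; apply: contrapT => not_tail.
have head A : F A -> exists2 i, A i /\ (i < n)%N & iter i T x = y.
  by move=> FA; case: (closure_image_tailV n T1 (omegaF_y A FA)).
have [A0 FA0 _] := free_familyP freeF 0.
have [m [_ _] xm_y] := head A0 FA0.
have [A1 FA1 A1m] := free_familyP freeF m.
have [m' [A1m' _] xm'_y] := head A1 FA1.
have neq_mm' : m != m' by apply/eqP => eq_mm'; rewrite eq_mm' in A1m.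
have [k le_nk xk_xm] := iter_neq_recurs neq_mm' (etrans xm_y (esym xm'_y)) n.
apply: not_tail; apply: subset_closure.
by exists k; last rewrite xk_xm.
Qed.

Lemma iter_in_omegaF (F : set (set nat)) (i : nat) (x : X) :
  (\bigcap_(A in F) A) i -> omegaF T F x (iter i T x).
Proof. by move=> Fi A FA; apply: subset_closure; exists i => //; exact: Fi. Qed.

Lemma omegaT_iter (i : nat) (x : X) : omegaT T x `<=` omegaT T (iter i T x).
Proof.
move=> y omegaT_y n n_gt0.
apply: closureS (omegaT_y (n + i)%N (ltn_addr _ n_gt0)) => _ [k /= le_nik <-].
have le_ik : (i <= k)%N := leq_trans (leq_addl n i) le_nik.
exists (k - i)%N; first by rewrite /= leq_subRL // addnC.
by rewrite -iterD subnK.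
Qed.

Lemma recurrent_of_bigcap_family {F : set (set nat)} :
  (forall y, exists x, T x = y) ->
  (forall x, omegaF T F x `<=` omegaT T x) ->
  \bigcap_(A in F) A !=set0 -> forall x, recurrent T x.
Proof.
move=> surjT omegaF_sub [i Fi] x.
have [z <-] := iter_surjective surjT i x.
exact/omegaT_iter/omegaF_sub/iter_in_omegaF.
Qed.

End OmegaLimitSets.

Lemma free_fip_strong_fip (F : set (set nat)) :
  free_family F -> fip F -> strong_fip F.
Proof.
move=> freeF fipF G finG GF fin_capG.
have /choice[avoid avoidP] : forall i, exists A, F A /\ ~ A i.
  by move=> i; have [A FA nAi] := free_familyP freeF i; exists A.
have finG' : finite_set (G `|` avoid @` (\bigcap_(A in G) A)).
  by rewrite finite_setU; split => //; exact: finite_image.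
have G'F : G `|` avoid @` (\bigcap_(A in G) A) `<=` F.
  by move=> A [/GF // | [i _ <-]]; have [] := avoidP i.
have [i capG'_i] := fipF _ finG' G'F.
have capG_i : (\bigcap_(A in G) A) i by move=> A GA; apply: capG'_i; left.
by have [_] := avoidP i; apply; apply: capG'_i; right; exists i.
Qed.

Theorem proposition2p2 (R : realType) (X : metricType R) (T : X -> X)
    (F : set (set nat)) :
  dynamical_system T -> is_family F ->
  [/\ (free_family F -> forall x : X, omegaF T F x `<=` omegaT T x),
      ((exists x : X, ~ recurrent T x) ->
         (forall x : X, omegaF T F x `<=` omegaT T x) -> free_family F) &
      (free_family F -> fip F -> strong_fip F)].
Proof.
move=> [_ _ _ _ surjT] _; split.
- exact/omegaF_sub_omegaT/hausdorff_accessible/metric_hausdorff.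
- move=> [x0 not_rec_x0] omegaF_sub; apply: contrapT => /eqP/set0P capF_nonempty.
  exact: not_rec_x0 (recurrent_of_bigcap_family T surjT omegaF_sub capF_nonempty x0).
- exact: free_fip_strong_fip.
Qed.
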